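(* Let $\lambda\in\mathbb{C}$ with $\lambda^6\neq0,1$ and let $w\in R=\mathbb{C}[x_0,\dots,x_{11},u_1,u_2]$ be \[w=u_1(x_0^3x_6^3+x_1^3x_7^3+x_2^3x_8^3-3\lambda x_3x_4x_5x_6x_7x_8)+u_2(x_3^3x_9^3+x_4^3x_{10}^3+x_5^3x_{11}^3-3\lambda x_0x_1x_2x_9x_{10}x_{11}).\] Let $\mathcal{T}$ be any triangulation of the point configuration $\mathfrak{C}=\{P_0,\dots,P_{11},S_1,S_2\}$ satisfying: (1) $\mathcal{T}$ contains the six simplices with vertex sets $\{P_i:i\in I\}\cup\{S_1,S_2\}$, $I\subseteq\{0,\dots,5\}$, $|I|=5$ (the set $\mathcal{T}_0$); (2) every simplex in $\mathcal{T}\setminus\mathcal{T}_0$ satisfies (A) or (B), where (A): none of $S_1,P_6,P_7,P_8$ is a vertex and for some $j\in\{3,4,5\}$ neither $P_j$ nor $P_{6+j}$ is a vertex; (B): none of $S_2,P_9,P_{10},P_{11}$ is a vertex and for some $j\in\{0,1,2\}$ neither $P_j$ nor $P_{6+j}$ is a vertex. Define \[\mathcal{I}=\Big\langle\prod_{i\notin I}x_i\prod_{j\notin J}u_j : \{P_i\}_{i\in I}\cup\{S_j\}_{j\in J}\text{ is the vertex set of a simplex of }\mathcal{T}\Big\rangle,\] \[\mathcal{J}=\Big\langle\prod_{i\notin I}x_i : \{P_i\}_{i\in I}\cup\{S_1,S_2\}\text{ is the vertex set of a simplex of }\mathcal{T}\Big\rangle.\] Then $\mathcal{I}\subseteq\sqrt{\langle\partial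 w\rangle+\mathcal{J}}$, where $\langle\partial w\rangle$ is the ideal generated by all partial derivatives of $w$.
   Context: $P_0=(3,0,0,-1,-1,0,1)$, $P_1=(0,3,0,-1,-1,0,1)$, $P_2=(0,0,3,-1,-1,0,1)$, $P_3=(-1,-1,-1,3,0,1,0)$, $P_4=(-1,-1,-1,0,3,1,0)$, $P_5=(-1,-1,-1,0,0,1,0)$, $P_6=(2,-1,-1,0,0,1,0)$, $P_7=(-1,2,-1,0,0,1,0)$, $P_8=(-1,-1,2,0,0,1,0)$, $P_9=(0,0,0,2,-1,0,1)$, $P_{10}=(0,0,0,-1,2,0,1)$, $P_{11}=(0,0,0,-1,-1,0,1)$, $S_1=(0,0,0,0,0,1,0)$, $S_2=(0,0,0,0,0,0,1)$ in $\mathbb{R}^7$. The variable $x_i$ corresponds to $P_i$ and $u_j$ to $S_j$. *)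

From HB Require Import structures.
From mathcomp Require Import all_boot all_order all_algebra.
From mathcomp Require Import Rstruct.
From mathcomp Require Import complex.
From mathcomp Require Import mpoly.
From Stdlib Require Rdefinitions.

Set Implicit Arguments.
Unset Strict Implicit.
Unset Printing Implicit Defensive.

Import GRing.Theory Num.Theory.
Local Open Scope ring_scope.

Notation RR := Rdefinitions.R.
Definition CC : fieldType := complex RR.

(* Index convention on 'I_14:
     i < 12  <->  P_i ,   12 <-> S_1 ,   13 <-> S_2.
   The same index convention is used for the variables of the polynomial
   ring: 'X_i = x_i for i < 12, 'X_12 = u_1, 'X_13 = u_2. *)

Definition pt_table : seq (seq int) :=
  [:: [:: 3; 0; 0; -1; -1; 0; 1];
      [:: 0; 3; 0; -1; -1; 0; 1];
      [:: 0; 0; 3; -1; -1; 0; 1];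
      [:: -1; -1; -1; 3; 0; 1; 0];
      [:: -1; -1; -1; 0; 3; 1; 0];
      [:: -1; -1; -1; 0; 0; 1; 0];
      [:: 2; -1; -1; 0; 0; 1; 0];
      [:: -1; 2; -1; 0; 0; 1; 0];
      [:: -1; -1; 2; 0; 0; 1; 0];
      [:: 0; 0; 0; 2; -1; 0; 1];
      [:: 0; 0; 0; -1; 2; 0; 1];
      [:: 0; 0; 0; -1; -1; 0; 1];
      [:: 0; 0; 0; 0; 0; 1; 0];
      [:: 0; 0; 0; 0; 0; 0; 1]].

Definition pt (i : 'I_14) : 'rV[RR]_7 :=
  \row_(j < 7) ((nth 0 (nth [::] pt_table i) j)%:~R).

Definition in_conv (s : {set 'I_14}) (x : 'rV[RR]_7) : Prop :=
  exists t : 'I_14 -> RR,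
    [/\ forall i, 0 <= t i, forall i, i \notin s -> t i = 0,
        \sum_i t i = 1 & x = \sum_i t i *: pt i].

Definition in_aff (s : {set 'I_14}) (x : 'rV[RR]_7) : Prop :=
  exists t : 'I_14 -> RR,
    [/\ forall i, i \notin s -> t i = 0,
        \sum_i t i = 1 & x = \sum_i t i *: pt i].

Definition aff_indep (s : {set 'I_14}) : Prop :=
  forall t : 'I_14 -> RR,
    (forall i, i \notin s -> t i = 0) ->
    \sum_i t i = 0 -> \sum_i t i *: pt i = 0 ->
    forall i, t i = 0.

(* A triangulation of the configuration {pt i}, given as the set of
   vertex sets of its maximal simplices: full-dimensional simplices
   (affinely independent, spanning the affine hull of the configuration)
   whose convex hulls cover the convex hull of the configuration and
   intersect properly (in a common face). *)
Definition triangulation (T : {set {set 'I_14}}) : Prop :=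
  [/\ forall s, s \in T -> aff_indep s /\ (forall j, in_aff s (pt j)),
      forall x, in_conv setT x -> exists2 s, s \in T & in_conv s x
    & forall s s' x, s \in T -> s' \in T ->
        in_conv s x -> in_conv s' x -> in_conv (s :&: s') x].

Definition T0 : {set {set 'I_14}} :=
  [set [set i : 'I_14 | ((i < 6)%N && (i != k :> nat)) || (12 <= i)%N]
     | k : 'I_6].

Definition condA (s : {set 'I_14}) : Prop :=
  (forall i : 'I_14, i \in s -> (val i \notin [:: 12; 6; 7; 8])%N) /\
  exists2 j : nat, (j \in [:: 3; 4; 5])%N &
     (forall i : 'I_14, i \in s -> (val i != j) && (val i != j + 6))%N.

Definition condB (s : {set 'I_14}) : Prop :=
  (forall i : 'I_14, i \in s -> (val i \notin [:: 13; 9; 10; 11])%N) /\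
  exists2 j : nat, (j \in [:: 0; 1; 2])%N &
     (forall i : 'I_14, i \in s -> (val i != j) && (val i != j + 6))%N.

Notation Rpoly := {mpoly CC[14]}.

Definition X (i : nat) : Rpoly := 'X_(inord i).

Definition w (lam : CC) : Rpoly :=
  X 12 * (X 0 ^+ 3 * X 6 ^+ 3 + X 1 ^+ 3 * X 7 ^+ 3 + X 2 ^+ 3 * X 8 ^+ 3
           - (3 * lam)%:MP * X 3 * X 4 * X 5 * X 6 * X 7 * X 8)
  + X 13 * (X 3 ^+ 3 * X 9 ^+ 3 + X 4 ^+ 3 * X 10 ^+ 3 + X 5 ^+ 3 * X 11 ^+ 3
           - (3 * lam)%:MP * X 0 * X 1 * X 2 * X 9 * X 10 * X 11).

Definition in_ideal (G : Rpoly -> Prop) (p : Rpoly) : Prop :=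
  exists (n : nat) (r g : 'I_n -> Rpoly),
    (forall k, G (g k)) /\ p = \sum_(k < n) r k * g k.

Definition in_radical (G : Rpoly -> Prop) (p : Rpoly) : Prop :=
  exists m : nat, in_ideal G (p ^+ m).

Definition genI (T : {set {set 'I_14}}) (p : Rpoly) : Prop :=
  exists2 s, s \in T & p = \prod_(i : 'I_14 | i \notin s) 'X_i.

Definition genJ (T : {set {set 'I_14}}) (p : Rpoly) : Prop :=
  exists2 s, s \in T /\ (inord 12 \in s /\ inord 13 \in s) &
    p = \prod_(i : 'I_14 | ((i < 12)%N && (i \notin s))) 'X_i.

Definition genDwJ (lam : CC) (T : {set {set 'I_14}}) (p : Rpoly) : Prop :=
  (exists i : 'I_14, p = mderiv i (w lam)) \/ genJ T p.

From HB Require Import structures.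
From mathcomp Require Import all_boot all_order all_algebra.
From mathcomp Require Import Rstruct complex mpoly.
From mathcomp Require Import ring zify.
Import GRing.Theory Num.Theory.
Local Open Scope ring_scope.

Set Implicit Arguments.
Unset Strict Implicit.
Unset Printing Implicit Defensive.

(* A generator of I comes from a simplex s of T.  If s contains S_1 and S_2
   it is a generator of J; otherwise s is not in T_0, so it satisfies (A) or
   (B) and the generator is divisible by one of the six monomials
   u_1 x_j x_6 x_7 x_8 x_(j+6) (j = 3,4,5) or u_2 x_j x_9 x_10 x_11 x_(j+6)
   (j = 0,1,2).  These form a single orbit under index permutations preserving
   w and the generators x_j x_6 ... x_11 of J given by T_0, so it suffices to
   put a := u_1 x_3 x_6 x_7 x_8 x_9 in the radical.  Working in the radical of
   the saturation by a, suitable combinations of partial derivatives of w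
   (dividing by 3 lam) successively yield x_0, x_4 x_5, u_2, x_5 and x_4, and
   then du_2 w yields 1, i.e. a power of a lies in <dw> + J. *)

Section IdealArithmetic.
Variables (R : comRingType) (Id : R -> Prop).
Hypothesis Id0 : Id 0.
Hypothesis IdD : forall x y, Id x -> Id y -> Id (x + y).
Hypothesis IdM : forall r x, Id x -> Id (r * x).

Lemma IdMr x r : Id x -> Id (x * r).
Proof. by rewrite mulrC; apply: IdM. Qed.

Lemma IdMn x k : Id x -> Id (x *+ k).
Proof. by rewrite -mulr_natl; apply: IdM. Qed.

(* In the binomial expansion of (f + g)^(n + m) every term is divisible
   by f^n or by g^m. *)
Lemma Id_expD f g n m :
  Id (f ^+ n) -> Id (g ^+ m) -> Id ((f + g) ^+ (n + m)).
Proof.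
move=> hf hg; rewrite exprDn; apply: (big_ind Id) => // i _; apply: IdMn.
case: (ltnP i m) => him.
- by rewrite -addnBA ?(ltnW him) // exprD -mulrA; apply: IdMr.
- by rewrite -(subnK him) exprD mulrA; apply: IdM.
Qed.

(* f lies in the radical of the saturation of Id with respect to a. *)
Definition in_satrad a f := exists k n, Id (a ^+ k * f ^+ n).

Lemma satradI a f : Id f -> in_satrad a f.
Proof. by exists 0%N, 1%N; rewrite expr0 mul1r expr1. Qed.

Lemma satradM a f g : in_satrad a f -> in_satrad a (g * f).
Proof. by case=> k [n h]; exists k, n; rewrite exprMn mulrCA; apply: IdM. Qed.

Lemma satradP a f : in_satrad a f <-> exists k n, Id ((a ^+ k * f) ^+ n).
Proof.
split=> -[k [n h]].
  exists k, n.+1; rewrite exprMn -exprM mulnS exprD exprS.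
  have -> : a ^+ k * a ^+ (k * n) * (f * f ^+ n) = a ^+ (k * n) * f * (a ^+ k * f ^+ n)
    by ring.
  exact: IdM.
by exists (k * n)%N, n; rewrite exprM -exprMn.
Qed.

Lemma satradD a f g : in_satrad a f -> in_satrad a g -> in_satrad a (f + g).
Proof.
move=> /satradP[k1 [n1 h1]] /satradP[k2 [n2 h2]]; apply/satradP.
exists (k1 + k2)%N, (n1 + n2)%N; rewrite mulrDr; apply: Id_expD.
  by rewrite exprD mulrAC exprMn; apply: IdMr.
by rewrite exprD -mulrA exprMn; apply: IdM.
Qed.

Lemma satradB a f g : in_satrad a f -> in_satrad a g -> in_satrad a (f - g).
Proof. by move=> hf hg; apply: satradD => //; rewrite -mulN1r; apply: satradM. Qed.

Lemma satrad_pow a f m : in_satrad a (f ^+ m) -> in_satrad a f.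
Proof. by case=> k [n h]; exists k, (m * n)%N; rewrite exprM. Qed.

Lemma satrad_cancel a f g h r : in_satrad a (f * g) -> g * h = a ^+ r -> in_satrad a f.
Proof.
case=> k [n hfg] ghE; exists (k + r * n)%N, n.
have -> : a ^+ (k + r * n) * f ^+ n = h ^+ n * (a ^+ k * (f * g) ^+ n).
  by rewrite exprD exprM -ghE !exprMn; ring.
exact: IdM.
Qed.

Lemma satrad1 a : in_satrad a 1 -> exists k, Id (a ^+ k).
Proof. by case=> k [n h]; exists k; rewrite expr1n mulr1 in h. Qed.

End IdealArithmetic.

Section Jacobian.
Variables (R : comRingType) (l : R) (x : nat -> R).

Definition wform : R :=
  x 12 * (x 0 ^+ 3 * x 6 ^+ 3 + x 1 ^+ 3 * x 7 ^+ 3 + x 2 ^+ 3 * x 8 ^+ 3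
          - 3 * l * x 3 * x 4 * x 5 * x 6 * x 7 * x 8)
  + x 13 * (x 3 ^+ 3 * x 9 ^+ 3 + x 4 ^+ 3 * x 10 ^+ 3 + x 5 ^+ 3 * x 11 ^+ 3
          - 3 * l * x 0 * x 1 * x 2 * x 9 * x 10 * x 11).

Definition grad (k : nat) : R :=
  match k with
  | 0 => 3 * (x 12 * x 0 ^+ 2 * x 6 ^+ 3) - 3 * l * (x 13 * x 1 * x 2 * x 9 * x 10 * x 11)
  | 1 => 3 * (x 12 * x 1 ^+ 2 * x 7 ^+ 3) - 3 * l * (x 13 * x 0 * x 2 * x 9 * x 10 * x 11)
  | 2 => 3 * (x 12 * x 2 ^+ 2 * x 8 ^+ 3) - 3 * l * (x 13 * x 0 * x 1 * x 9 * x 10 * x 11)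
  | 3 => 3 * (x 13 * x 3 ^+ 2 * x 9 ^+ 3) - 3 * l * (x 12 * x 4 * x 5 * x 6 * x 7 * x 8)
  | 4 => 3 * (x 13 * x 4 ^+ 2 * x 10 ^+ 3) - 3 * l * (x 12 * x 3 * x 5 * x 6 * x 7 * x 8)
  | 5 => 3 * (x 13 * x 5 ^+ 2 * x 11 ^+ 3) - 3 * l * (x 12 * x 3 * x 4 * x 6 * x 7 * x 8)
  | 6 => 3 * (x 12 * x 0 ^+ 3 * x 6 ^+ 2) - 3 * l * (x 12 * x 3 * x 4 * x 5 * x 7 * x 8)
  | 7 => 3 * (x 12 * x 1 ^+ 3 * x 7 ^+ 2) - 3 * l * (x 12 * x 3 * x 4 * x 5 * x 6 * x 8)
  | 8 => 3 * (x 12 * x 2 ^+ 3 * x 8 ^+ 2) - 3 * l * (x 12 * x 3 * x 4 * x 5 * x 6 * x 7)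
  | 9 => 3 * (x 13 * x 3 ^+ 3 * x 9 ^+ 2) - 3 * l * (x 13 * x 0 * x 1 * x 2 * x 10 * x 11)
  | 10 => 3 * (x 13 * x 4 ^+ 3 * x 10 ^+ 2) - 3 * l * (x 13 * x 0 * x 1 * x 2 * x 9 * x 11)
  | 11 => 3 * (x 13 * x 5 ^+ 3 * x 11 ^+ 2) - 3 * l * (x 13 * x 0 * x 1 * x 2 * x 9 * x 10)
  | 12 => x 0 ^+ 3 * x 6 ^+ 3 + x 1 ^+ 3 * x 7 ^+ 3 + x 2 ^+ 3 * x 8 ^+ 3
          - 3 * l * (x 3 * x 4 * x 5 * x 6 * x 7 * x 8)
  | 13 => x 3 ^+ 3 * x 9 ^+ 3 + x 4 ^+ 3 * x 10 ^+ 3 + x 5 ^+ 3 * x 11 ^+ 3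
          - 3 * l * (x 0 * x 1 * x 2 * x 9 * x 10 * x 11)
  | _ => 0
  end.

Definition T0_monomial (j : nat) : R := x j * x 6 * x 7 * x 8 * x 9 * x 10 * x 11.

Section Derivation.
Variable D : R -> R.
Hypothesis DD : forall a b, D (a + b) = D a + D b.
Hypothesis DM : forall a b, D (a * b) = D a * b + a * D b.
Hypothesis Dl : D l = 0.

Lemma derivation0 : D 0 = 0.
Proof. by apply: (addrI (D 0)); rewrite -DD !addr0. Qed.

Lemma derivationN a : D (- a) = - D a.
Proof. by apply: (addrI (D a)); rewrite -DD !subrr derivation0. Qed.

Lemma derivation_nat n : D n%:R = 0.
Proof.
have D1 : D 1 = 0 by apply: (addIr (D 1)); rewrite -{3}[1]mul1r DM mulr1 mul1r add0r.
by elim: n => [|n IHn]; rewrite ?derivation0 // -addn1 natrD DD IHn D1 addr0.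
Qed.

Lemma derivationX a n : D (a ^+ n.+1) = a ^+ n *+ n.+1 * D a.
Proof.
elim: n => [|n IHn]; first by rewrite expr1 expr0 mul1r.
by rewrite exprS DM IHn mulrnAl mulrnAr mulrA -exprS mulrnAl [D a * _]mulrC addrC -mulrSr.
Qed.

Lemma derivation_wform k :
  (forall j, (j < 14)%N -> D (x j) = (j == k)%:R) -> (k < 14)%N -> D wform = grad k.
Proof.
move=> Dx; rewrite /wform !(DD, DM, derivationN, derivationX, derivation_nat, Dl) !Dx //.
by case: k {Dx} => [|[|[|[|[|[|[|[|[|[|[|[|[|[|k]]]]]]]]]]]]]] //= _; ring.
Qed.
End Derivation.
End Jacobian.

Definition relabel (t : seq nat) (k : nat) : nat := nth k t k.

(* Index permutations preserving w and the T_0-monomials: exchanging the two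
   halves of w, and the transpositions (3 4)(9 10) and (3 5)(9 11). *)
Definition swap_halves : seq nat := [:: 3; 4; 5; 0; 1; 2; 9; 10; 11; 6; 7; 8; 13; 12].
Definition swap34 : seq nat := [:: 0; 1; 2; 4; 3; 5; 6; 7; 8; 10; 9; 11; 12; 13].
Definition swap35 : seq nat := [:: 0; 1; 2; 5; 4; 3; 6; 7; 8; 11; 10; 9; 12; 13].
Definition w_symmetries : seq (seq nat) := [:: swap_halves; swap34; swap35].

Lemma relabel_lt14 t k : t \in w_symmetries -> (k < 14)%N -> (relabel t k < 14)%N.
Proof.
by rewrite !inE => /or3P[]/eqP->; case: k => [|[|[|[|[|[|[|[|[|[|[|[|[|[|k]]]]]]]]]]]]]].
Qed.

Lemma relabel_lt6 t j : t \in w_symmetries -> (j < 6)%N -> (relabel t j < 6)%N.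
Proof.
by rewrite !inE => /or3P[]/eqP->; case: j => [|[|[|[|[|[|j]]]]]].
Qed.

Lemma grad_relabel (R : comRingType) (l : R) x t k : t \in w_symmetries ->
  grad l (x \o relabel t) k = grad l x (relabel t k).
Proof.
by rewrite !inE => /or3P[]/eqP->; rewrite /relabel /swap_halves /swap34 /swap35;
  case: k => [|[|[|[|[|[|[|[|[|[|[|[|[|[|k]]]]]]]]]]]]]] //=;
  rewrite ?nth_nil //; ring.
Qed.

Lemma T0_monomial_relabel (R : comRingType) (x : nat -> R) t j :
  t \in w_symmetries -> (j < 6)%N -> T0_monomial (x \o relabel t) j = T0_monomial x (relabel t j).
Proof.
by rewrite !inE => /or3P[]/eqP->; rewrite /relabel /swap_halves /swap34 /swap35;
  case: j => [|[|[|[|[|[|j]]]]]] //= _; rewrite /T0_monomial /=; ring.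
Qed.

Section SeparatingMonomials.
Variables (R : comRingType) (Id : R -> Prop).
Hypothesis Id0 : Id 0.
Hypothesis IdD : forall x y, Id x -> Id y -> Id (x + y).
Hypothesis IdM : forall r x, Id x -> Id (r * x).
Variables (l il i3 : R).
Hypotheses (lK : il * l = 1) (threeK : i3 * 3 = 1).

(* Id contains the partial derivatives of w and the generators x_j x_6 ... x_11
   of J coming from the simplices of T_0. *)
Definition contains_gradJ (x : nat -> R) : Prop :=
  (forall k, (k < 14)%N -> Id (grad l x k)) /\
  (forall j, (j < 6)%N -> Id (T0_monomial x j)).

Lemma contains_gradJ_relabel x t :
  t \in w_symmetries -> contains_gradJ x -> contains_gradJ (x \o relabel t).
Proof.
move=> ht [hgrad hJ]; split=> [k hk | j hj].
  by rewrite grad_relabel //; apply/hgrad/relabel_lt14.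
by rewrite T0_monomial_relabel //; apply/hJ/relabel_lt6.
Qed.

Section BaseCase.
Variable x : nat -> R.
Hypothesis hx : contains_gradJ x.

Let a := x 12 * x 3 * x 6 * x 7 * x 8 * x 9.
Let sat := in_satrad Id a.
Let satI f : Id f -> sat f := satradI a (f := f).
Let satD f g : sat f -> sat g -> sat (f + g) := satradD Id0 IdD IdM (f := f) (g := g).
Let satB f g : sat f -> sat g -> sat (f - g) := satradB Id0 IdD IdM (f := f) (g := g).
Let satM f g : sat f -> sat (g * f) := satradM IdM (f := f) g.

Let Id_grad k : (k < 14)%N -> Id (grad l x k). Proof. by case: hx => h _; apply: h. Qed.
Let Id_T0 : Id (T0_monomial x 3). Proof. by case: hx => _; apply. Qed.

Let sat_x0 : sat (x 0).
Proof.
apply: (satrad_pow (m := 2)).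
apply: (satrad_cancel IdM (g := 3 * x 12 * x 3 * x 6 ^+ 4 * x 7 * x 8)
          (h := i3 * (x 12 ^+ 3 * x 3 ^+ 3 * x 7 ^+ 3 * x 8 ^+ 3 * x 9 ^+ 4)) (r := 4)).
  apply: satI.
  have -> : x 0 ^+ 2 * (3 * x 12 * x 3 * x 6 ^+ 4 * x 7 * x 8) =
    (x 3 * x 6 * x 7 * x 8) * grad l x 0
    + (3 * l * x 13 * x 1 * x 2) * T0_monomial x 3 by rewrite /T0_monomial /=; ring.
  by apply: IdD; apply: IdM; [apply: Id_grad | apply: Id_T0].
by rewrite /a; ring: threeK.
Qed.

Let sat_x4x5 : sat (x 4 * x 5).
Proof.
apply: (satrad_cancel IdM (g := 3 * l * x 12 * x 3 * x 6 * x 7 * x 8)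
          (h := i3 * il * x 9) (r := 1)); last by rewrite /a; ring: threeK lK.
have -> : x 4 * x 5 * (3 * l * x 12 * x 3 * x 6 * x 7 * x 8) =
  (3 * x 12 * x 0 ^+ 2 * x 6 ^+ 3) * x 0 - x 6 * grad l x 6 by rewrite /=; ring.
by apply: satB; [apply: satM | apply/satI/IdM/Id_grad].
Qed.

Let sat_x13 : sat (x 13).
Proof.
apply: (satrad_cancel IdM (g := 3 * x 3 ^+ 2 * x 9 ^+ 3)
          (h := i3 * (x 12 ^+ 3 * x 3 * x 6 ^+ 3 * x 7 ^+ 3 * x 8 ^+ 3)) (r := 3));
  last by rewrite /a; ring: threeK.
have -> : x 13 * (3 * x 3 ^+ 2 * x 9 ^+ 3) =
  grad l x 3 + (3 * l * x 12 * x 6 * x 7 * x 8) * (x 4 * x 5) by rewrite /=; ring.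
by apply: satD; [apply/satI/Id_grad | apply: satM].
Qed.

Let sat_x5 : sat (x 5).
Proof.
apply: (satrad_cancel IdM (g := 3 * l * x 12 * x 3 * x 6 * x 7 * x 8)
          (h := i3 * il * x 9) (r := 1)); last by rewrite /a; ring: threeK lK.
have -> : x 5 * (3 * l * x 12 * x 3 * x 6 * x 7 * x 8) =
  (3 * x 4 ^+ 2 * x 10 ^+ 3) * x 13 - grad l x 4 by rewrite /=; ring.
by apply: satB; [apply: satM | apply/satI/Id_grad].
Qed.

Let sat_x4 : sat (x 4).
Proof.
apply: (satrad_cancel IdM (g := 3 * l * x 12 * x 3 * x 6 * x 7 * x 8)
          (h := i3 * il * x 9) (r := 1)); last by rewrite /a; ring: threeK lK.
have -> : x 4 * (3 * l * x 12 * x 3 * x 6 * x 7 * x 8) =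
  (3 * x 5 ^+ 2 * x 11 ^+ 3) * x 13 - grad l x 5 by rewrite /=; ring.
by apply: satB; [apply: satM | apply/satI/Id_grad].
Qed.

Lemma condA3_monomial_in_radical : exists n, Id ((x 12 * x 3 * x 6 * x 7 * x 8 * x 9) ^+ n).
Proof.
apply: satrad1; apply: (satrad_cancel IdM (g := x 3 ^+ 3 * x 9 ^+ 3)
          (h := x 12 ^+ 3 * x 6 ^+ 3 * x 7 ^+ 3 * x 8 ^+ 3) (r := 3)); last by rewrite /a; ring.
have -> : 1 * (x 3 ^+ 3 * x 9 ^+ 3) =
  grad l x 13 - (x 4 ^+ 2 * x 10 ^+ 3) * x 4 - (x 5 ^+ 2 * x 11 ^+ 3) * x 5
  + (3 * l * x 1 * x 2 * x 9 * x 10 * x 11) * x 0 by rewrite /=; ring.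
have grad13 : sat (grad l x 13) by apply/satI/Id_grad.
by apply: satD; [apply: satB; [apply: satB |] |]; try apply: satM.
Qed.
End BaseCase.

Lemma condA_monomial_in_radical x j : contains_gradJ x -> j \in [:: 3; 4; 5] ->
  exists n, Id ((\prod_(k <- [:: 12; j; 6; 7; 8; j + 6]%N) x k) ^+ n).
Proof.
move=> hx; rewrite !inE => /or3P[]/eqP->; rewrite !big_cons big_nil mulr1 !mulrA.
- exact: condA3_monomial_in_radical hx.
- exact: condA3_monomial_in_radical (contains_gradJ_relabel (t := swap34) isT hx).
- exact: condA3_monomial_in_radical (contains_gradJ_relabel (t := swap35) isT hx).
Qed.

Lemma condB_monomial_in_radical x j : contains_gradJ x -> j \in [:: 0; 1; 2] ->
  exists n, Id ((\prod_(k <- [:: 13; j; 9; 10; 11; j + 6]%N) x k) ^+ n).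
Proof.
move=> /(contains_gradJ_relabel (t := swap_halves) isT) hx.
rewrite !inE => /or3P[]/eqP->; rewrite !big_cons big_nil mulr1 !mulrA.
- exact: condA3_monomial_in_radical hx.
- exact: condA3_monomial_in_radical (contains_gradJ_relabel (t := swap34) isT hx).
- exact: condA3_monomial_in_radical (contains_gradJ_relabel (t := swap35) isT hx).
Qed.
End SeparatingMonomials.

Section IdealGeneratedBy.
Variable G : Rpoly -> Prop.

Lemma in_ideal0 : in_ideal G 0.
Proof. by exists 0%N, (fun=> 0), (fun=> 0); split; [case | rewrite big_ord0]. Qed.

Lemma in_idealD p q : in_ideal G p -> in_ideal G q -> in_ideal G (p + q).
Proof.
case=> n1 [r1 [g1 [h1 ->]]] [n2 [r2 [g2 [h2 ->]]]].
pose r k := match split k with inl i => r1 i | inr j => r2 j end.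
pose g k := match split k with inl i => g1 i | inr j => g2 j end.
exists (n1 + n2)%N, r, g; split; first by move=> k; rewrite /g; case: (split k).
have splitl i : split (lshift n2 i) = inl i := unsplitK (inl i).
have splitr i : split (rshift n1 i) = inr i := unsplitK (inr i).
by rewrite big_split_ord; congr (_ + _); apply: eq_bigr => i _; rewrite /r /g ?splitl ?splitr.
Qed.

Lemma in_idealM r p : in_ideal G p -> in_ideal G (r * p).
Proof.
case=> n [r1 [g1 [h1 ->]]]; exists n, (fun k => r * r1 k), g1; split => //.
by rewrite mulr_sumr; apply: eq_bigr => i _; rewrite mulrA.
Qed.

Lemma in_idealG p : G p -> in_ideal G p.
Proof. by exists 1%N, (fun=> 1), (fun=> p); split => //; rewrite big_ord1 mul1r. Qed.

Lemma in_radical_ideal (H : Rpoly -> Prop) p :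
  (forall q, H q -> in_radical G q) -> in_ideal H p -> in_radical G p.
Proof.
move=> HG [n [r [g [hg ->]]]]; apply: big_ind => [|q1 q2 [m1 h1] [m2 h2]|k _].
- by exists 1%N; rewrite expr1; apply: in_ideal0.
- by exists (m1 + m2)%N; apply: Id_expD h1 h2; [apply: in_ideal0|apply: in_idealD|apply: in_idealM].
- by case: (HG _ (hg k)) => m hm; exists m; rewrite exprMn; apply: in_idealM.
Qed.
End IdealGeneratedBy.

Lemma mderiv_var (i j : 'I_14) : mderiv i 'X_j = (j == i)%:R :> Rpoly.
Proof.
rewrite mderivX mnm1E; have [->|_] := eqVneq j i; last by rewrite scale0r.
have -> : (U_(i) - U_(i))%MM = 0%MM by apply/mnmP => k; rewrite mnmBE subnn mnm0E.
by rewrite mpolyX0 scale1r.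
Qed.

Lemma mderiv_X j k : (j < 14)%N -> (k < 14)%N -> mderiv (inord k) (X j) = (j == k)%:R.
Proof. by move=> hj hk; rewrite mderiv_var -val_eqE /= !inordK. Qed.

Lemma mderiv_w lam k : (k < 14)%N -> mderiv (inord k) (w lam) = grad lam%:MP X k.
Proof.
move=> hk; have -> : w lam = wform lam%:MP X by rewrite /w rmorphM /= rmorph_nat.
apply: derivation_wform => //; [exact: mderivD | exact: mderivM | exact: mderivC |].
by move=> j hj; apply: mderiv_X.
Qed.

Lemma prod_X_mem (l : seq nat) : uniq l -> all (fun k => k < 14)%N l ->
  \prod_(i : 'I_14 | val i \in l) 'X_i = \prod_(k <- l) X k :> Rpoly.
Proof.
elim: l => [|k l IHl] /=; first by rewrite big_nil big_pred0.
case/andP=> kNl ul /andP[k14 l14].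
rewrite (bigD1 (inord k)) /= ?inordK ?mem_head // big_cons -IHl //; congr (_ * _).
apply: eq_bigl => i; rewrite in_cons -val_eqE /= inordK //.
by case: eqP => [->|] /=; rewrite ?(negbTE kNl) ?andbT.
Qed.

Lemma genJ_T0 (T : {set {set 'I_14}}) j : T0 \subset T -> (j < 6)%N -> genJ T (T0_monomial X j).
Proof.
move=> T0T hj; exists [set i : 'I_14 | ((i < 6)%N && (i != (inord j : 'I_6) :> nat)) || (12 <= i)%N].
  split; first by apply: (subsetP T0T); apply: imset_f.
  by rewrite !inE !inordK.
have -> : T0_monomial X j = \prod_(k <- [:: j; 6; 7; 8; 9; 10; 11]%N) X k.
  by rewrite !big_cons big_nil mulr1 !mulrA.
rewrite -prod_X_mem /=; last 2 first.
- by rewrite !inE; lia.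
- by rewrite (leq_trans hj).
apply: eq_bigl => i; rewrite !inE inordK //.
apply/idP/idP; lia.
Qed.

Lemma in_radical_prod_notin G (s : {set 'I_14}) (l : seq nat) :
  (exists n, in_ideal G ((\prod_(k <- l) X k) ^+ n)) ->
  uniq l -> all (fun k => k < 14)%N l -> (forall i, i \in s -> val i \notin l) ->
  in_radical G (\prod_(i | i \notin s) 'X_i).
Proof.
move=> [n hn] ul l14 sl; exists n.
rewrite (bigID (fun i : 'I_14 => val i \in l)) /= exprMn mulrC; apply: in_idealM.
rewrite (eq_bigl (fun i : 'I_14 => val i \in l)) ?prod_X_mem // => i.
by case: (boolP (i \in s)) => [/sl/negPf ->|].
Qed.

Lemma genJ_prod_notin (T : {set {set 'I_14}}) s : s \in T ->
  inord 12 \in s -> inord 13 \in s -> genJ T (\prod_(i | i \notin s) 'X_i).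
Proof.
move=> sT S1s S2s; exists s => //; apply: eq_bigl => i.
case: (ltnP i 12) => //= i12; apply/negbTE/negPn.
have [->|] := eqVneq i (inord 12) => // ne12.
suff -> : i = inord 13 by [].
by apply/val_inj; move: ne12; rewrite -val_eqE /= !inordK //; have := ltn_ord i; lia.
Qed.

Lemma contains_gradJ_w (T : {set {set 'I_14}}) lam :
  T0 \subset T -> contains_gradJ (in_ideal (genDwJ lam T)) lam%:MP X.
Proof.
move=> T0T; split=> [k hk | j hj]; apply: in_idealG.
  by left; exists (inord k); rewrite mderiv_w.
by right; apply: genJ_T0.
Qed.

Lemma condAB_prod_notin_in_radical G (lam : CC) s : lam != 0 ->
  contains_gradJ (in_ideal G) lam%:MP X -> condA s \/ condB s ->
  in_radical G (\prod_(i | i \notin s) 'X_i).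
Proof.
move=> lam0 hX condAB.
have lK : (lam^-1)%:MP * lam%:MP = 1 :> Rpoly by rewrite -rmorphM /= mulVf.
have threeK : ((3 : CC)^-1)%:MP * 3 = 1 :> Rpoly.
  have -> : 3 = (3 : CC)%:MP :> Rpoly by rewrite rmorph_nat.
  by rewrite -rmorphM /= mulVf // pnatr_eq0.
have sepA := condA_monomial_in_radical (in_ideal0 G) (@in_idealD G) (@in_idealM G) lK threeK hX.
have sepB := condB_monomial_in_radical (in_ideal0 G) (@in_idealD G) (@in_idealM G) lK threeK hX.
case: condAB => [[hs [j hj hsj]] | [hs [j hj hsj]]];
  [apply: in_radical_prod_notin (sepA j hj) _ _ _ |
   apply: in_radical_prod_notin (sepB j hj) _ _ _];
  try by move: hj; rewrite !inE => /or3P[]/eqP->.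
all: move=> i /[dup] /hs + /hsj; rewrite !inE.
all: by move=> /norP[/negPf-> /norP[/negPf-> /norP[/negPf-> /negPf->]]] /andP[/negPf-> /negPf->].
Qed.

Theorem mainTheorem10 (lam : CC) (T : {set {set 'I_14}}) :
  lam ^+ 6 != 0 -> lam ^+ 6 != 1 ->
  triangulation T ->
  T0 \subset T ->
  (forall s, s \in T -> s \notin T0 -> condA s \/ condB s) ->
  forall p : Rpoly, in_ideal (genI T) p -> in_radical (genDwJ lam T) p.
Proof.
move=> lam6_neq0 _ _ T0T condAB p; apply: in_radical_ideal => _ [s sT ->].
have [/andP[S1s S2s] | NS12] := boolP ((inord 12 \in s) && (inord 13 \in s)).
  by exists 1%N; rewrite expr1; apply/in_idealG; right; apply: genJ_prod_notin.
have lam_neq0 : lam != 0 by apply: contraNneq lam6_neq0 => ->; rewrite expr0n.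
apply: condAB_prod_notin_in_radical lam_neq0 (contains_gradJ_w lam T0T) (condAB s sT _).
by apply: contra NS12 => /imsetP[k _ ->]; rewrite !inE !inordK.
Qed.
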